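(* If $\mathcal{T}$ is a single-elimination tournament with at least $2$ players and $N$ total brackets, then for every scoring system $\sigma$ we have $\mathrm{res}(\mathcal{T},\sigma)>\tfrac14 N$.
   Context: A single-elimination tournament is a finite directed graph $\mathcal{T}$ such that: (a) $\mathcal{T}$ has exactly one sink (vertex with no out-neighbours); (b) every non-sink vertex has exactly one out-neighbour; (c) $\mathcal{T}$ has no directed cycles; (d) $|N^-(v)|\ne 1$ for every vertex $v$, where $N^-(v)$ denotes the set of in-neighbours of $v$. The players $P(\mathcal{T})$ are the sources and the matches are $M(\mathcal{T})=V(\mathcal{T})\setminus P(\mathcal{T})$. A bracket is a function $B:V(\mathcal{T})\to P(\mathcal{T})$ with $B(a)=a$ for every player $a$ and $B(x)\in\{B(u):u\in N^-(x)\}$ for every match $x$. A scoring system is any function $\sigma:M(\mathcal{T})\to\mathbb{R}_{>0}$. For brackets $B,B'$ let $\mathrm{score}_\sigma(B,B')=\sum_{x\in M(\mathcal{T}):\,B(x)=B'(x)}\sigma(x)$. A set of brackets $\mathcal{B}$ is $\sigma$-resolving if for every pair of distinct brackets $B\ne B'$ there is $B_i\in\mathcal{B}$ with $\mathrm{score}_\sigma(B_i,B)\ne\mathrm{score}_\sigma(B_i,B')$. $\mathrm{res}(\mathcal{T},\sigma)$ is the minimum $r$ such that every set of $r$ brackets is $\sigma$-resolving. *)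

From HB Require Import structures.
From mathcomp Require Import all_boot all_order all_algebra.
From mathcomp Require Import reals.
Set Implicit Arguments. Unset Strict Implicit. Unset Printing Implicit Defensive.
Import Order.TTheory GRing.Theory Num.Theory.

Section Tournament.
Variable V : finType.
Variable e : rel V.

Definition is_sink (v : V) : bool := [forall w, ~~ e v w].
Definition in_nbhd (v : V) : {set V} := [set u | e u v].
Definition out_nbhd (v : V) : {set V} := [set w | e v w].

Definition single_elim_tournament : Prop :=
  [/\ #|[set v | is_sink v]| = 1%N,
      (forall v, ~~ is_sink v -> #|out_nbhd v| = 1%N),
      (forall u v, e u v -> ~~ connect e v u)
    & (forall v, #|in_nbhd v| != 1%N)].

Definition is_player (v : V) : bool := [forall u, ~~ e u v].
Definition is_match (v : V) : bool := ~~ is_player v.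
Definition players : {set V} := [set v | is_player v].

Definition is_bracket (B : {ffun V -> V}) : bool :=
  [forall v, is_player (B v)] &&
  [forall a, is_player a ==> (B a == a)] &&
  [forall x, is_match x ==> [exists u, e u x && (B x == B u)]].

Definition brackets : {set {ffun V -> V}} := [set B | is_bracket B].

Variable R : realType.
Definition scoring_system (sigma : V -> R) : Prop :=
  forall x, is_match x -> (0 < sigma x)%R.

Definition score (sigma : V -> R) (B B' : {ffun V -> V}) : R :=
  (\sum_(x | is_match x && (B x == B' x)) sigma x)%R.

Definition resolving (sigma : V -> R) (S : {set {ffun V -> V}}) : bool :=
  [forall B, forall B', (is_bracket B && is_bracket B' && (B != B')) ==>
     [exists Bi in S, score sigma Bi B != score sigma Bi B']].

Definition all_sets_resolving (sigma : V -> R) (r : nat) : bool :=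
  [forall S : {set {ffun V -> V}},
     ((S \subset brackets) && (#|S| == r)) ==> resolving sigma S].

Lemma all_sets_resolving_exists (sigma : V -> R) :
  exists r, all_sets_resolving sigma r.
Proof.
exists (#|brackets|.+1); apply/forallP => S; apply/implyP => /andP[sub /eqP cS].
by move: (subset_leq_card sub); rewrite cS ltnn.
Qed.

Definition res (sigma : V -> R) : nat :=
  ex_minn (all_sets_resolving_exists sigma).

End Tournament.

From HB Require Import structures.
From mathcomp Require Import all_boot all_order all_algebra.
From mathcomp Require Import reals.
From mathcomp Require Import zify.

(** Let t be the final, i.e. the unique sink, fix a bracket B and two distinct
    in-neighbours x, y of t. Changing only the champion of B to B x, resp. B y, gives two
    distinct brackets which score equally against every bracket whose champion is neither
    B x nor B y; so no set of Z such brackets resolves them, and res exceeds Z. It remains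
    to bound the number N of brackets by 4 Z + 3, by injecting the brackets with a fixed
    champion into those avoiding both: if t has a third in-neighbour z, let the winner of
    z win the final (N <= 3 Z); if an in-neighbour u of t is a match, let the winner of
    another child of u win both u and the final (N <= 4 Z); otherwise both in-neighbours
    of t are players and N <= 2. *)

Set Implicit Arguments. Unset Strict Implicit. Unset Printing Implicit Defensive.

Definition acyclic (T : finType) (r : rel T) := forall u v, r u v -> ~~ connect r v u.

Lemma acyclic_ind (T : finType) (r : rel T) : acyclic r ->
  forall P : T -> Prop, (forall v, (forall u, r u v -> P u) -> P v) -> forall v, P v.
Proof.
move=> acyc P IH v; have [n] := ubnP #|[set w | connect r w v]|.
elim: n v => // n IHn v; rewrite ltnS => le_n; apply: IH => u ruv; apply: IHn.
apply: leq_trans le_n; apply: proper_card; apply/properP; split.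
  by apply/subsetP => w; rewrite !inE => /connect_trans; apply; apply: connect1.
by exists v; rewrite !inE ?connect0 ?acyc.
Qed.

Lemma acyclic_rev (T : finType) (r : rel T) : acyclic r -> acyclic [rel x y | r y x].
Proof. by move=> acyc u v ruv; rewrite connect_rev acyc. Qed.

Lemma connect_first_step (T : finType) (r : rel T) x y :
  connect r x y -> x = y \/ exists2 z, r x z & connect r z y.
Proof.
case/connectP => [[|z p]] /= pth ->; first by left.
by case/andP: pth => rxz pth; right; exists z => //; apply/connectP; exists p.
Qed.

Lemma connect_last_step (T : finType) (r : rel T) x y :
  connect r x y -> x = y \/ exists2 z, connect r x z & r z y.
Proof.
case/connectP => p; elim/last_ind: p => [|p z _] /= pth ->; first by left.
rewrite last_rcons; move: pth; rewrite rcons_path => /andP[pth rz].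
by right; exists (last x p) => //; apply/connectP; exists p.
Qed.

Lemma leq_card_inj_into (T T' : finType) (f : T -> T') (A : {set T}) (B : {set T'}) :
  {in A &, injective f} -> {in A, forall x, f x \in B} -> #|A| <= #|B|.
Proof.
move=> injf fAB; rewrite -(card_in_imset injf); apply: subset_leq_card.
by apply/subsetP => _ /imsetP[x Ax ->]; exact: fAB.
Qed.

Definition upd (aT : finType) (rT : eqType) (B : {ffun aT -> rT}) (x : aT) (y : rT) :
  {ffun aT -> rT} := [ffun v => if v == x then y else B v].

Lemma upd_inj (aT : finType) (rT : eqType) (B1 B2 : {ffun aT -> rT}) x y1 y2 :
  B1 x = B2 x -> upd B1 x y1 = upd B2 x y2 -> B1 = B2.
Proof.
move=> B12x /ffunP upd12; apply/ffunP => v; case: (eqVneq v x) => [-> // | vx].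
by move: (upd12 v); rewrite !ffunE (negbTE vx).
Qed.

Lemma card_gt1_neq (T : finType) (A : {set T}) x : 1 < #|A| -> exists2 y, y \in A & y != x.
Proof.
case/card_gt1P => [y [z [yA zA yz]]]; case: (eqVneq y x) => [yx | ]; last by exists y.
by exists z; rewrite // -yx eq_sym.
Qed.

Lemma eq_score (V : finType) (e : rel V) (R : realType) (sigma : V -> R)
    (B B' Bi : {ffun V -> V}) :
  (forall x, (Bi x == B x) = (Bi x == B' x)) -> score e sigma Bi B = score e sigma Bi B'.
Proof. by move=> eqBi; apply: eq_bigl => x; rewrite eqBi. Qed.

Lemma card_lt_res (V : finType) (e : rel V) (R : realType) (sigma : V -> R)
    (B B' : {ffun V -> V}) (Z : {set {ffun V -> V}}) :
  is_bracket e B -> is_bracket e B' -> B != B' -> Z \subset brackets e ->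
  {in Z, forall Bi, score e sigma Bi B = score e sigma Bi B'} -> #|Z| < res e sigma.
Proof.
move=> bB bB' BB' Zb Zconf; rewrite /res; case: ex_minnP => r /forallP all_res _.
rewrite ltnNge; apply/negP => /card_geqP[s [s_uniq s_size sZ]].
have sb : [set Bi in s] \subset brackets e.
  by apply/subsetP => Bi; rewrite inE => /sZ /(subsetP Zb).
move/implyP: (all_res [set Bi in s]); rewrite sb cardsE (card_uniqP s_uniq) s_size eqxx.
move=> /(_ isT) /forallP /(_ B) /forallP /(_ B') /implyP; rewrite bB bB' BB'.
by case/(_ isT)/existsP => Bi /andP[]; rewrite inE => /sZ /Zconf ->; rewrite eqxx.
Qed.

Section Tournament.

Variables (V : finType) (e : rel V).
Hypothesis tourn : single_elim_tournament e.

Lemma tournament_acyclic : acyclic e.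
Proof. by case: tourn. Qed.

Lemma edge_neq u v : e u v -> u != v.
Proof. by move=> euv; apply: contraTneq (tournament_acyclic euv) => ->; rewrite connect0. Qed.

Lemma match_of_edge u x : e u x -> is_match e x.
Proof. by move=> eux; apply/forallPn; exists u; rewrite negbK. Qed.

Lemma player_neq_match a x : is_player e a -> is_match e x -> a != x.
Proof. by move=> pa; apply: contraNneq => <-. Qed.

Lemma out_edge_uniq v w1 w2 : e v w1 -> e v w2 -> w1 = w2.
Proof.
case: tourn => _ out1 _ _ e1 e2.
have /out1 /eqP/cards1P[w out_w] : ~~ is_sink e v.
  by apply/forallPn; exists w1; rewrite negbK.
have : w1 \in out_nbhd e v by rewrite inE.
have : w2 \in out_nbhd e v by rewrite inE.
by rewrite out_w !inE => /eqP -> /eqP ->.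
Qed.

Lemma in_nbhd_gt1 x : is_match e x -> 1 < #|in_nbhd e x|.
Proof.
case: tourn => _ _ _ /(_ x) in_neq1 /forallPn[u]; rewrite negbK => eux.
have : 0 < #|in_nbhd e x| by apply/card_gt0P; exists u; rewrite inE.
by move: in_neq1; case: #|in_nbhd e x| => [|[]].
Qed.

Lemma connect_player p v : is_player e p -> connect e v p -> v = p.
Proof.
by move=> /forallP p_src /connect_last_step[// | [z _ ezp]]; move: (p_src z); rewrite ezp.
Qed.

Lemma connect_total p x y : connect e p x -> connect e p y -> connect e x y || connect e y x.
Proof.
elim/(acyclic_ind (acyclic_rev tournament_acyclic)): p => p IH /= px py.
case: (connect_first_step px) => [<- | [w epw wx]]; first by rewrite py.
case: (connect_first_step py) => [<- | [w' epw' w'y]]; first by rewrite px orbT.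
by rewrite -(out_edge_uniq epw epw') in w'y; exact: IH epw _ _.
Qed.

Lemma sibling_eq_of_connect m x y p :
  e x m -> e y m -> connect e p x -> connect e p y -> x = y.
Proof.
have sib_eq x' y' : e x' m -> e y' m -> connect e x' y' -> x' = y'.
  move=> exm eym /connect_first_step[// | [w exw wy]].
  rewrite (out_edge_uniq exw exm) in wy.
  by move: (tournament_acyclic eym); rewrite wy.
move=> exm eym /connect_total /[apply] /orP[] c; first exact: sib_eq c.
by apply: esym; apply: sib_eq c.
Qed.

Lemma is_bracketP (B : {ffun V -> V}) : reflect
  [/\ forall v, is_player e (B v), forall a, is_player e a -> B a = a
    & forall x, is_match e x -> exists2 u, e u x & B x = B u]
  (is_bracket e B).
Proof.
apply: (iffP idP) => [/andP[/andP[/forallP Bp /forallP Bfix] /forallP Bm] | [Bp Bfix Bm]].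
  split=> [// | a /(implyP (Bfix a))/eqP // | x /(implyP (Bm x))/existsP[u /andP[eux /eqP]]].
  by exists u.
apply/andP; split; [apply/andP; split |].
- exact/forallP.
- by apply/forallP => a; apply/implyP => /Bfix ->.
- apply/forallP => x; apply/implyP => /Bm[u eux Bxu].
  by apply/existsP; exists u; rewrite eux Bxu /=.
Qed.

Lemma bracket_connect B v : is_bracket e B -> connect e (B v) v.
Proof.
case/is_bracketP => _ Bfix Bm; elim/(acyclic_ind tournament_acyclic): v => v IH.
have [pv | mv] := boolP (is_player e v); first by rewrite Bfix.
have [u euv ->] := Bm v mv; exact: connect_trans (IH u euv) (connect1 euv).
Qed.

Lemma bracket_sibling_neq B m x y a :
  e x m -> e y m -> x != y -> connect e a x -> is_bracket e B -> B y != a.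
Proof.
move=> exm eym /eqP xy ax /bracket_connect By; apply/eqP => Bya.
by apply: xy; apply: sibling_eq_of_connect exm eym ax _; rewrite -Bya.
Qed.

Definition players_below v := [pred p | is_player e p && connect e p v].

Definition first_player v :=
  [arg min_(p < odflt v [pick p in players_below v] | p \in players_below v) enum_rank p].

Lemma players_below_nonempty v : exists p, p \in players_below v.
Proof.
elim/(acyclic_ind tournament_acyclic): v => v IH.
have [pv | /forallPn[u]] := boolP (is_player e v); first by exists v; rewrite inE pv connect0.
rewrite negbK => euv; have [p /andP[pp pu]] := IH u euv.
by exists p; rewrite inE pp (connect_trans pu (connect1 euv)).
Qed.

Lemma first_playerP v : first_player v \in players_below v /\
  {in players_below v, forall q, enum_rank (first_player v) <= enum_rank q}.
Proof.
rewrite /first_player; case: pickP => [p0 p0v | none]; first by case: arg_minnP.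
by have [p pv] := players_below_nonempty v; move: (none p); rewrite pv.
Qed.

Lemma first_player_bracket : is_bracket e [ffun v => first_player v].
Proof.
apply/is_bracketP; split=> [v | a pa | x mx]; rewrite !ffunE.
- by case: (first_playerP v) => /andP[].
- by case: (first_playerP a) => /andP[_ /(connect_player pa)].
have [/andP[pp px] px_min] := first_playerP x.
case: (connect_last_step px) => [xp | [u pu eux]]; first by move: mx; rewrite /is_match -xp pp.
have below_ux q : q \in players_below u -> q \in players_below x.
  by case/andP=> pq qu; rewrite inE pq (connect_trans qu (connect1 eux)).
have [/below_ux fu_below_x fu_min] := first_playerP u.
have fx_below_u : first_player x \in players_below u by rewrite inE pp.
exists u; rewrite // ffunE; apply/enum_rank_inj/val_inj/eqP.
by rewrite eqn_leq px_min ?fu_min.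
Qed.

Section FinalMatch.

Variable t : V.
Hypothesis sinks_t : [set v | is_sink e v] = [set t].

Lemma sink_no_out w : ~~ e t w.
Proof.
have : t \in [set v | is_sink e v] by rewrite sinks_t set11.
by rewrite inE => /forallP.
Qed.

Lemma connect_sink v : connect e v t.
Proof.
elim/(acyclic_ind (acyclic_rev tournament_acyclic)): v => v IH.
have [/= sv | /forallPn[w /negPn evw]] := boolP (is_sink e v).
  by move: sv; rewrite -[is_sink e v]in_set sinks_t inE => /eqP ->.
exact: connect_trans (connect1 evw) (IH w evw).
Qed.

Lemma sink_match : 1 < #|players e| -> is_match e t.
Proof.
apply: contraTN => pt; rewrite -leqNgt; apply/card_le1P => p _ q.
by rewrite !inE (connect_player pt (connect_sink p)) (connect_player pt (connect_sink q))
  pt eqxx.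
Qed.

Lemma upd_sink_bracket u B : e u t -> is_bracket e B -> is_bracket e (upd B t (B u)).
Proof.
move=> eut /is_bracketP[Bp Bfix Bm].
apply/is_bracketP; split=> [v | a pa | x mx]; rewrite !ffunE.
- by case: ifP.
- by rewrite ifN ?Bfix ?(player_neq_match pa (match_of_edge eut)).
case: eqP => [-> | /eqP xt]; first by exists u; rewrite // ffunE ifN ?edge_neq.
have [w ewx ->] := Bm x mx; exists w; rewrite // ffunE ifN //.
by apply: contraTneq ewx => ->; exact: sink_no_out.
Qed.

Lemma upd2_sink_bracket u v B : e u t -> e v u -> is_bracket e B ->
  is_bracket e (upd (upd B u (B v)) t (B v)).
Proof.
move=> eut evu /is_bracketP[Bp Bfix Bm].
apply/is_bracketP; split=> [x | a pa | x mx]; rewrite !ffunE.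
- by case: ifP => _; last case: ifP.
- by rewrite !ifN ?Bfix
    ?(player_neq_match pa (match_of_edge eut)) ?(player_neq_match pa (match_of_edge evu)).
have [ut vu] := (edge_neq eut, edge_neq evu).
have vt : v != t by apply: contraTneq evu => ->; exact: sink_no_out.
case: eqP => [-> | /eqP xt]; first by exists u; rewrite // !ffunE eqxx ifN.
case: eqP => [-> | /eqP xu]; first by exists v; rewrite // !ffunE !ifN.
have [w ewx ->] := Bm x mx; exists w; rewrite // !ffunE !ifN //.
  apply: contraTneq ewx => ->; apply/negP => eux.
  by rewrite (out_edge_uniq eux eut) eqxx in xt.
by apply: contraTneq ewx => ->; exact: sink_no_out.
Qed.

Definition brackets_champion a := [set B in brackets e | B t == a].

Definition brackets_champion_not a c := [set B in brackets e | (B t != a) && (B t != c)].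

Lemma card_brackets_le_champions a c : #|brackets e| <=
  #|brackets_champion a| + #|brackets_champion c| + #|brackets_champion_not a c|.
Proof.
have cover : brackets e \subset
    brackets_champion a :|: brackets_champion c :|: brackets_champion_not a c.
  by apply/subsetP => B; rewrite !inE => ->; case: (B t == a); case: (B t == c).
apply: leq_trans (subset_leq_card cover) _.
by rewrite !(leq_trans (leq_card_setU _ _).1) // leq_add2r (leq_card_setU _ _).1.
Qed.

Lemma brackets_le_three_champion_not x y z a c :
  e x t -> e y t -> e z t -> x != y -> y != z -> z != x ->
  connect e a x -> connect e c y -> #|brackets e| <= 3 * #|brackets_champion_not a c|.
Proof.
move=> ext eyt ezt xy yz zx ax cy.
have champion_le d : #|brackets_champion d| <= #|brackets_champion_not a c|.
  apply: (@leq_card_inj_into _ _ (fun B => upd B t (B z))).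
    move=> B1 B2; rewrite !inE => /andP[_ /eqP B1t] /andP[_ /eqP B2t].
    by apply: upd_inj; rewrite B1t B2t.
  move=> B; rewrite !inE => /andP[bB _]; rewrite upd_sink_bracket //= ffunE eqxx.
  by rewrite (bracket_sibling_neq ext ezt) ?(bracket_sibling_neq eyt ezt) // eq_sym.
have := card_brackets_le_champions a c; have := champion_le a; have := champion_le c.
lia.
Qed.

Lemma bracket_champion_child B u a :
  e u t -> connect e a u -> is_bracket e B -> B t = a -> B u = a.
Proof.
move=> eut au bB Bta; have /is_bracketP[_ _ Bm] := bB.
have [u' eu't Btu'] := Bm t (match_of_edge eut).
have [-> | uu'] := eqVneq u u'; first by rewrite -Btu'.
by move: (bracket_sibling_neq eut eu't uu' au bB); rewrite -Btu' Bta eqxx.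
Qed.

Lemma brackets_le_four_champion_not u w v1 v2 a c :
  e u t -> e w t -> u != w -> e v1 u -> e v2 u -> v1 != v2 ->
  connect e a v1 -> connect e c w -> #|brackets e| <= 4 * #|brackets_champion_not a c|.
Proof.
(* Brackets with champion a inject into those avoiding a and c, and brackets with champion c
   into the set W of brackets won by u's winner, each of which has champion a or avoids both. *)
move=> eut ewt uw ev1u ev2u v12 av1 cw.
have au : connect e a u := connect_trans av1 (connect1 ev1u).
have tu : t != u by rewrite eq_sym edge_neq.
have champion_u_neq B : is_bracket e B -> B u != c.
  by apply: bracket_sibling_neq ewt eut _ cw; rewrite eq_sym.
have champion_a_le : #|brackets_champion a| <= #|brackets_champion_not a c|.
  apply: (@leq_card_inj_into _ _ (fun B => upd (upd B u (B v2)) t (B v2))).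
    move=> B1 B2; rewrite !inE => /andP[b1 /eqP B1t] /andP[b2 /eqP B2t] upd12.
    have B12u : B1 u = B2 u by rewrite !(bracket_champion_child eut au).
    by apply: upd_inj B12u _; apply: upd_inj upd12; rewrite !ffunE !ifN // B1t B2t.
  move=> B; rewrite !inE => /andP[bB _]; rewrite upd2_sink_bracket //= !ffunE eqxx.
  rewrite (bracket_sibling_neq ev1u ev2u v12 av1 bB) /=.
  have := champion_u_neq (upd (upd B u (B v2)) t (B v2)) (upd2_sink_bracket eut ev2u bB).
  by rewrite !ffunE (negbTE (edge_neq eut)) eqxx.
pose W := [set B in brackets e | B t == B u].
have champion_c_le : #|brackets_champion c| <= #|W|.
  apply: (@leq_card_inj_into _ _ (fun B => upd B t (B u))).
    move=> B1 B2; rewrite !inE => /andP[_ /eqP B1t] /andP[_ /eqP B2t].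
    by apply: upd_inj; rewrite B1t B2t.
  move=> B; rewrite !inE => /andP[bB _].
  by rewrite upd_sink_bracket //= !ffunE eqxx ifN ?edge_neq.
have W_le : #|W| <= #|brackets_champion a| + #|brackets_champion_not a c|.
  apply: leq_trans (leq_card_setU _ _).1; apply: subset_leq_card; apply/subsetP => B.
  rewrite !inE => /andP[bB /eqP ->]; rewrite bB champion_u_neq //=.
  by case: (B u == a).
have := card_brackets_le_champions a c; lia.
Qed.

Lemma brackets_le_in_nbhd : is_match e t -> (forall u, e u t -> is_player e u) ->
  #|brackets e| <= #|in_nbhd e t|.
Proof.
move=> mt in_players.
have player_off_t v : v != t -> is_player e v.
  move=> vt; case: (connect_last_step (connect_sink v)) => [vt' | [z vz ezt]].
    by rewrite vt' eqxx in vt.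
  by rewrite (connect_player (in_players z ezt) vz); exact: in_players.
apply: (@leq_card_inj_into _ _ (fun B : {ffun V -> V} => B t)).
  move=> B1 B2; rewrite !inE => /is_bracketP[_ B1fix _] /is_bracketP[_ B2fix _] B12t.
  apply/ffunP => v; have [-> // | vt] := eqVneq v t.
  by rewrite B1fix ?B2fix ?player_off_t.
move=> B; rewrite !inE => /is_bracketP[_ Bfix Bm]; have [u eut ->] := Bm t mt.
by rewrite Bfix ?in_players.
Qed.

Lemma brackets_le_champion_not : 1 < #|players e| ->
  exists B x y, [/\ is_bracket e B, e x t, e y t, x != y &
    #|brackets e| <= 4 * #|brackets_champion_not (B x) (B y)| + 3].
Proof.
move=> players_gt1; have mt := sink_match players_gt1.
have bB := first_player_bracket; set B := [ffun v => first_player v] in bB *.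
have in_t_gt1 := in_nbhd_gt1 mt.
have [/card_gt2P[x [y [z [[]]]]] | in_t_le2] := ltnP 2 #|in_nbhd e t|.
  rewrite !inE => ext eyt ezt [xy yz zx]; exists B, x, y; split=> //.
  have := brackets_le_three_champion_not ext eyt ezt xy yz zx
    (bracket_connect x bB) (bracket_connect y bB).
  lia.
have [/existsP[u /andP[eut mu]] | no_match_in] := boolP [exists u, e u t && is_match e u].
  have [w ewt wu] := card_gt1_neq u in_t_gt1; rewrite inE in ewt.
  have /is_bracketP[_ _ /(_ u mu)[v1 ev1u Buv1]] := bB.
  have [v2 ev2u v21] := card_gt1_neq v1 (in_nbhd_gt1 mu); rewrite inE in ev2u.
  exists B, u, w; split=> //; first by rewrite eq_sym.
  have av1 : connect e (B u) v1 by rewrite Buv1 bracket_connect.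
  have := brackets_le_four_champion_not eut ewt _ ev1u ev2u _ av1 (bracket_connect w bB).
  rewrite eq_sym wu eq_sym v21 => /(_ isT isT); lia.
have [x [y [ext eyt xy]]] := card_gt1P in_t_gt1; rewrite !inE in ext eyt.
exists B, x, y; split=> //.
have in_players u : e u t -> is_player e u.
  by move=> eut; move/existsPn: no_match_in => /(_ u); rewrite eut negbK.
have := brackets_le_in_nbhd mt in_players; lia.
Qed.

Lemma card_champion_not_lt_res (R : realType) (sigma : V -> R) B x y :
  is_bracket e B -> e x t -> e y t -> x != y ->
  #|brackets_champion_not (B x) (B y)| < res e sigma.
Proof.
move=> bB ext eyt xy.
have Byx : B y != B x := bracket_sibling_neq ext eyt xy (bracket_connect x bB) bB.
apply: (@card_lt_res _ _ _ _ (upd B t (B x)) (upd B t (B y))).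
- exact: upd_sink_bracket.
- exact: upd_sink_bracket.
- by apply: contraNneq Byx => /ffunP/(_ t); rewrite !ffunE eqxx => ->.
- by apply/subsetP => Bi; rewrite inE => /andP[].
move=> Bi; rewrite inE => /andP[_ /andP[Bix Biy]]; apply: eq_score => v.
by rewrite !ffunE; case: ifP => [/eqP -> | //]; rewrite (negbTE Bix) (negbTE Biy).
Qed.

End FinalMatch.

End Tournament.

Unset Implicit Arguments.

Theorem corollaryA3 (V : finType) (e : rel V) (R : realType) (sigma : V -> R) :
  single_elim_tournament e ->
  (2 <= #|players e|)%N ->
  scoring_system e sigma ->
  (#|brackets e| < 4 * res e sigma)%N.
Proof.
move=> tourn players_gt1 _.
have [t sinks_t] : exists t, [set v | is_sink e v] = [set t] by case: tourn => /eqP/cards1P.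
have [B [x [y [bB ext eyt xy brackets_le]]]] :=
  brackets_le_champion_not tourn sinks_t players_gt1.
have := card_champion_not_lt_res tourn sinks_t sigma bB ext eyt xy.
lia.
Qed.
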